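(* Let $c\in\mathbb{N}$ and $I=\mathbb{N}\times[c]$. Then for any $\mathrm{Sym}$-invariant lattice $L\subseteq\mathbb{Z}^{(I)}$, the monoid $M=L\cap\mathbb{Z}_{\ge0}^{(I)}$ has a finite equivariant Hilbert basis.
   Context: $\mathbb{N}=\{1,2,\dots\}$. $\mathbb{Z}^{(I)}$ is the free abelian group with basis $I$ (standard basis $\mathbf{e}_{i,j}$), $\mathbb{Z}_{\ge0}^{(I)}$ its nonnegative vectors; a lattice is a subgroup. $\mathrm{Sym}$ is the group of permutations of $\mathbb{N}$ fixing all but finitely many points, acting by linear extension of $\sigma(\mathbf{e}_{i,j})=\mathbf{e}_{\sigma(i),j}$. A Hilbert basis of a monoid is a minimal generating set w.r.t. $\mathbb{Z}_{\ge0}$-linear combinations; $\mathcal{H}\subseteq M$ is an equivariant Hilbert basis if $\mathrm{Sym}(\mathcal{H})=\{\sigma(\mathbf{h})\mid\sigma\in\mathrm{Sym},\mathbf{h}\in\mathcal{H}\}$ is a Hilbert basis of $M$. *)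

From mathcomp Require Import all_boot all_order all_algebra.
From Stdlib Require List.
Set Implicit Arguments. Unset Strict Implicit. Unset Printing Implicit Defensive.
Import Order.TTheory GRing.Theory Num.Theory.
Local Open Scope ring_scope.

(* Vectors in Z^I, I = N x [c]; N is indexed by nat (0,1,2,...), [c] by 'I_c. *)
Definition vec (c : nat) := nat -> 'I_c -> int.

(* finite support: membership in Z^(I) *)
Definition fin_supp (c : nat) (v : vec c) : Prop :=
  exists n : nat, forall (i : nat) (j : 'I_c), (n <= i)%N -> v i j = 0.

Definition is_sym (s : nat -> nat) : Prop :=
  bijective s /\ exists n : nat, forall i : nat, (n <= i)%N -> s i = i.

(* w = s(v) where s(e_{i,j}) = e_{s(i),j}, i.e. w (s i) j = v i j *)
Definition sym_act (c : nat) (s : nat -> nat) (v w : vec c) : Prop :=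
  forall (i : nat) (j : 'I_c), w (s i) j = v i j.

Definition lattice (c : nat) (L : vec c -> Prop) : Prop :=
  (forall v, L v -> fin_supp v) /\
  L (fun _ _ => 0) /\
  (forall v w, L v -> L w -> L (fun i j => v i j - w i j)).

Definition sym_invariant (c : nat) (L : vec c -> Prop) : Prop :=
  forall (s : nat -> nat) (v w : vec c), is_sym s -> L v -> sym_act s v w -> L w.

Definition nonneg (c : nat) (v : vec c) : Prop :=
  fin_supp v /\ forall (i : nat) (j : 'I_c), 0 <= v i j.

Definition monoid_of (c : nat) (L : vec c -> Prop) : vec c -> Prop :=
  fun v => L v /\ nonneg v.

Definition nncomb (c : nat) (s : seq (nat * vec c)) : vec c :=
  fun i j => \sum_(p <- s) (p.1)%:Z * p.2 i j.

Definition generates (c : nat) (G M : vec c -> Prop) : Prop :=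
  forall m, M m -> exists s : seq (nat * vec c),
    (forall p, List.In p s -> G p.2) /\ m = nncomb s.

Definition hilbert_basis (c : nat) (G M : vec c -> Prop) : Prop :=
  (forall g, G g -> M g) /\ generates G M /\
  (forall G' : vec c -> Prop, (forall g, G' g -> G g) -> generates G' M ->
     forall g, G g -> G' g).

Definition sym_orbit (c : nat) (H : seq (vec c)) : vec c -> Prop :=
  fun w => exists (s : nat -> nat) (h : vec c),
    is_sym s /\ List.In h H /\ sym_act s h w.

Definition equiv_hilbert_basis (c : nat) (H : seq (vec c)) (M : vec c -> Prop) : Prop :=
  (forall h, List.In h H -> M h) /\ hilbert_basis (sym_orbit H) M.

From mathcomp Require Import all_boot order ssralg ssrnum ssrint.
From mathcomp Require Import zify.
From Stdlib Require Import Classical ClassicalEpsilon FunctionalExtensionality.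
From Stdlib Require List.
Set Implicit Arguments. Unset Strict Implicit. Unset Printing Implicit Defensive.
Import Order.TTheory GRing.Theory Num.Theory.

(* Since L is a group, m - a stays in M whenever a <= m in M; hence the
   Hilbert basis of M is the set of its minimal nonzero elements, and it
   suffices that these fall into finitely many Sym-orbits.  Encode a
   nonnegative vector as the word (v_{0,.}, ..., v_{n-1,.}) over the alphabet
   N^c ordered componentwise.  An embedding of words is realised by a
   permutation in Sym, so by Higman's lemma every infinite sequence of minimal
   elements contains u before v with u <= sigma(v) for some sigma; minimality
   of v then forces sigma^-1(u) = v, i.e. u and v lie in the same orbit. *)

Definition good X (R : X -> X -> Prop) (f : nat -> X) :=
  exists i j, i < j /\ R (f i) (f j).
Definition wqo X (R : X -> X -> Prop) := forall f, good R f.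

Lemma ex_minP (Q : nat -> Prop) :
  (exists n, Q n) -> exists n, Q n /\ forall m, Q m -> n <= m.
Proof.
move=> [n Qn]; apply: NNPP => no_min; elim/ltn_ind: n Qn => n IH Qn.
apply: no_min; exists n; split=> // m Qm; rewrite leqNgt; apply/negP => mn.
exact: IH mn Qm.
Qed.

Lemma dependent_choice T (Q : T -> Prop) (Rel : T -> T -> Prop) (x0 : T) :
  Q x0 -> (forall x, Q x -> exists2 y, Q y & Rel x y) ->
  exists g : nat -> T, g 0 = x0 /\ forall k, Q (g k) /\ Rel (g k) (g k.+1).
Proof.
move=> Qx0 step.
have step' x : exists y, Q x -> Q y /\ Rel x y.
  case: (classic (Q x)) => [/step [y Qy Rxy] | nQx]; [by exists y | by exists x].
have [next nextP] := choice _ step'.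
have Q_iter k : Q (iter k next x0) by elim: k => //= k /nextP [].
by exists (fun k => iter k next x0); split=> // k; split; last exact: (nextP _ (Q_iter k)).2.
Qed.

Lemma prefix_choice T (Q : seq T -> Prop) (Rel : seq T -> T -> Prop) :
  Q [::] -> (forall s, Q s -> exists2 y, Q (rcons s y) & Rel s y) ->
  exists F : nat -> T, forall n, Q (mkseq F n) /\ Rel (mkseq F n) (F n).
Proof.
move=> Q0 step; have [y0 _ _] := step _ Q0.
have step' s : Q s -> exists2 t, Q t & exists2 y, t = rcons s y & Rel s y.
  by move=> /step [y Qy Rsy]; exists (rcons s y) => //; exists y.
have [g [g0 gS]] := dependent_choice Q0 step'.
pose F k := nth y0 (g k.+1) k.
have gE n : g n = mkseq F n.
  elim: n => [|n IH]; first by rewrite g0.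
  have [_ [y gSn _]] := gS n.
  by rewrite mkseqS -IH /F gSn nth_rcons IH size_mkseq ltnn eqxx.
exists F => n; have [Qg [y gSn Rgy]] := gS n.
have -> : F n = y by rewrite /F gSn nth_rcons gE size_mkseq ltnn eqxx.
by rewrite -gE.
Qed.

Lemma In_mkseq T (F : nat -> T) i n : i < n -> List.In (F i) (mkseq F n).
Proof.
by move=> lt_in; apply/List.in_map_iff; exists i; split=> //; apply/List.in_seq; lia.
Qed.

Lemma good_finite_cover X (S : X -> Prop) (E : X -> X -> Prop) :
  (forall x : nat -> X, (forall k, S (x k)) -> good E x) ->
  exists H : seq X, (forall h, List.In h H -> S h) /\
    forall y, S y -> exists2 h, List.In h H & E h y.
Proof.
move=> goodE; apply: NNPP => no_cover.
have [||F FP] := prefix_choice (Q := fun H => forall h, List.In h H -> S h)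
  (Rel := fun H y => forall h, List.In h H -> ~ E h y) _ _.
- by move=> h [].
- move=> H SH; apply: NNPP => stuck; apply: no_cover; exists H; split=> // y Sy.
  apply: NNPP => uncovered; apply: stuck; exists y.
  + by move=> h; rewrite -cats1 => /List.in_app_iff [/SH | [<- | []]].
  + by move=> h hH Ehy; apply: uncovered; exists h.
have S_F k : S (F k) by apply: (FP k.+1).1; exact: In_mkseq.
have [i [j [ij Eij]]] := goodE F S_F.
exact: (FP j).2 _ (In_mkseq F ij) Eij.
Qed.

Section WellQuasiOrder.
Variables (X : Type) (R : X -> X -> Prop).
Hypothesis R_trans : forall y x z, R x y -> R y z -> R x z.
Hypothesis wqoR : wqo R.

Lemma wqo_eventually_dominated (f : nat -> X) :
  exists N, forall i, N <= i -> exists2 j, i < j & R (f i) (f j).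
Proof.
apply: NNPP => no_bound.
pose terminal i := forall j, i < j -> ~ R (f i) (f j).
have terminal_unbounded N : exists2 i, N <= i & terminal i.
  apply: NNPP => none; apply: no_bound; exists N => i Ni; apply: NNPP => no_j.
  by apply: none; exists i => // j ij Rij; apply: no_j; exists j.
have [i0 _ terminal_i0] := terminal_unbounded 0.
have later i : terminal i -> exists2 j, terminal j & i < j.
  by move=> _; have [j ij tj] := terminal_unbounded i.+1; exists j.
have [g [_ gP]] := dependent_choice (Rel := fun i j => i < j) terminal_i0 later.
have g_mono : {homo g : k l / k < l} := homo_ltn ltn_trans (fun k => (gP k).2).
have [k [l [kl Rkl]]] := wqoR (f \o g).
exact: (gP k).1 _ (g_mono _ _ kl) Rkl.
Qed.

Lemma wqo_chain_subseq (f : nat -> X) : exists g : nat -> nat,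
  {homo g : k l / k < l} /\ {homo f \o g : k l / k < l >-> R k l}.
Proof.
have [N dom] := wqo_eventually_dominated f.
have step i : N <= i -> exists2 j, N <= j & i < j /\ R (f i) (f j).
  by move=> Ni; have [j ij Rij] := dom i Ni; exists j => //; exact: leq_trans Ni (ltnW ij).
have [g [_ gP]] := dependent_choice (Q := fun i => N <= i) (leqnn N) step.
exists g; split; apply: homo_ltn.
- exact: ltn_trans.
- by move=> k; exact: (gP k).2.1.
- exact: R_trans.
- by move=> k; exact: (gP k).2.2.
Qed.

Lemma wqo_and (R' : X -> X -> Prop) : wqo R' -> wqo (fun x y => R x y /\ R' x y).
Proof.
move=> wqoR' f; have [g [g_mono chain]] := wqo_chain_subseq f.
have [k [l [kl R'kl]]] := wqoR' (f \o g).
by exists (g k), (g l); split; [exact: g_mono | split; [exact: chain |]].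
Qed.

End WellQuasiOrder.

Lemma wqo_leq : wqo (fun m n : nat => m <= n).
Proof.
move=> f; have [_ [[i <-] min_fi]] :=
  @ex_minP (fun v => exists i, f i = v) (ex_intro _ _ (ex_intro _ 0 erefl)).
by exists i, i.+1; split=> //; apply: min_fi; exists i.+1.
Qed.

Lemma wqo_leq_pointwise (I : finType) :
  wqo (fun u v : I -> nat => forall i, u i <= v i).
Proof.
suff wqo_on (s : seq I) : wqo (fun u v : I -> nat => forall i, i \in s -> u i <= v i).
  move=> f; have [k [l [kl le_kl]]] := wqo_on (enum I) f.
  by exists k, l; split=> // i; apply: le_kl; rewrite mem_enum.
elim: s => [|i s IH] f; first by exists 0, 1.
have wqo_i : wqo (fun u v : I -> nat => u i <= v i) := fun g => wqo_leq (fun k => g k i).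
have [k [l [kl [le_s le_i]]]] := wqo_and
  (fun v u w le_uv le_vw j js => leq_trans (le_uv j js) (le_vw j js)) IH wqo_i f.
by exists k, l; split=> // j; rewrite in_cons => /orP [/eqP -> | /le_s].
Qed.

Inductive emb X (R : X -> X -> Prop) : seq X -> seq X -> Prop :=
| emb_nil t : emb R [::] t
| emb_skip s y t : emb R s t -> emb R s (y :: t)
| emb_cons x s y t : R x y -> emb R s t -> emb R (x :: s) (y :: t).

Section Higman.
Variables (X : Type) (x0 : X) (R : X -> X -> Prop).
Hypothesis R_trans : forall y x z, R x y -> R y z -> R x z.
Hypothesis wqoR : wqo R.

Definition bad_prefix (s : seq (seq X)) :=
  exists2 h, ~ good (emb R) h & forall k, k < size s -> h k = nth [::] s k.

Lemma minimal_bad_seq : (exists h, ~ good (emb R) h) ->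
  exists2 F, ~ good (emb R) F &
    forall n y, bad_prefix (rcons (mkseq F n) y) -> size (F n) <= size y.
Proof.
move=> [h0 bad_h0].
have [||F FP] := prefix_choice (Q := bad_prefix)
  (Rel := fun s y => forall y', bad_prefix (rcons s y') -> size y <= size y') _ _.
- by exists h0.
- move=> s [h bad_h hs].
  have ext_h : bad_prefix (rcons s (h (size s))).
    exists h => // k; rewrite size_rcons ltnS leq_eqVlt nth_rcons.
    by case/orP=> [/eqP -> | lt_ks]; [rewrite ltnn eqxx | rewrite lt_ks hs].
  have [_ [[y [ext_y <-]] min_y]] :=
    @ex_minP (fun n => exists y, bad_prefix (rcons s y) /\ size y = n)
             (ex_intro _ _ (ex_intro _ _ (conj ext_h erefl))).
  by exists y => // y' ext_y'; apply: min_y; exists y'.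
exists F => [[i [j [ij Fij]]] | n y]; last exact: (FP n).2.
have [h bad_h hF] := (FP j.+1).1.
apply: bad_h; exists i, j; split=> //.
by rewrite !hF ?size_mkseq ?nth_mkseq // (ltn_trans ij).
Qed.

Lemma higman : wqo (emb R).
Proof.
move=> f; apply: NNPP => bad_f.
have [F bad_F minF] := minimal_bad_seq (ex_intro _ f bad_f).
have F_cons n : F n = head x0 (F n) :: behead (F n).
  case E: (F n) => [|a t] //; case: bad_F; exists n, n.+1; split=> //.
  by rewrite E; exact: emb_nil.
have [g [g_mono chain]] := wqo_chain_subseq R_trans wqoR (fun n => head x0 (F n)).
have g0_le m : g 0 <= g m by case: m => // m; exact/ltnW/g_mono.
pose t n := behead (F n).
(* Splicing the tails of the F (g k) after F 0, ..., F (g 0 - 1) gives a bad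
   sequence smaller than F at position g 0. *)
pose h m := if m < g 0 then F m else t (g (m - g 0)).
have bad_h : ~ good (emb R) h.
  move=> [i [j [ij]]]; rewrite /h; case: (ltnP i (g 0)) => ig; case: (ltnP j (g 0)) => jg.
  - by move=> e; apply: bad_F; exists i, j.
  - move=> e; apply: bad_F; exists i, (g (j - g 0)).
    split; first exact: leq_trans ig (g0_le _).
    by rewrite (F_cons (g _)); apply: emb_skip.
  - lia.
  - move=> e; apply: bad_F; exists (g (i - g 0)), (g (j - g 0)).
    have ij' : i - g 0 < j - g 0 by lia.
    split; first exact: g_mono.
    rewrite (F_cons (g (i - g 0))) (F_cons (g (j - g 0))).
    by apply: emb_cons => //; apply: chain.
suff : size (F (g 0)) <= size (t (g 0)) by rewrite {1}(F_cons (g 0)) /= ltnn.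
apply: minF; exists h => // k; rewrite size_rcons size_mkseq ltnS nth_rcons size_mkseq /h.
case: ltnP => kg le_k; first by rewrite nth_mkseq.
have -> : k = g 0 by lia.
by rewrite eqxx subnn.
Qed.

End Higman.

Lemma is_sym_id : is_sym id.
Proof. by split; [exists id | exists 0]. Qed.

Lemma is_sym_comp p q : is_sym p -> is_sym q -> is_sym (q \o p).
Proof.
move=> [bij_p [n pn]] [bij_q [m qm]]; split; first exact: bij_comp.
by exists (maxn n m) => i; rewrite geq_max => /andP [ni mi] /=; rewrite pn ?qm.
Qed.

Lemma is_sym_inv s : is_sym s -> exists2 s', is_sym s' & cancel s s' /\ cancel s' s.
Proof.
move=> [[s' sK s'K] [n sn]]; exists s' => //; split; first by exists s.
by exists n => i ni; rewrite -{1}(sn i ni) sK.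
Qed.

Definition slift (p : nat -> nat) (m : nat) := if m is m'.+1 then (p m').+1 else 0.

Definition rot (n m : nat) := if m < n then m.+1 else if m == n then 0 else m.
Definition rotV (n m : nat) := if m == 0 then n else if m <= n then m.-1 else m.

Lemma is_sym_slift p : is_sym p -> is_sym (slift p).
Proof.
move=> [[q pK qK] [n pn]]; split; first by exists (slift q) => -[|m] //=; rewrite ?pK ?qK.
by exists n.+1 => -[|m] //= /pn ->.
Qed.

Lemma is_sym_rot n : is_sym (rot n).
Proof.
split; first by exists (rotV n) => m; rewrite /rot /rotV; do !case: ifP; lia.
by exists n.+1 => m nm; rewrite /rot; do !case: ifP; lia.
Qed.

Lemma emb_sym X (x0 : X) (R : X -> X -> Prop) s t : emb R s t ->
  exists2 p, is_sym p & forall k, k < size s ->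
    p k < size t /\ R (nth x0 s k) (nth x0 t (p k)).
Proof.
elim=> {s t} [t | s y t _ [p sym_p emb_p] | x s y t Rxy _ [p sym_p emb_p]].
- by exists id; [exact: is_sym_id | move=> k].
- exists (rot (size t) \o p); first exact/is_sym_comp/is_sym_rot.
  by move=> k /emb_p [pk Rk]; rewrite /= /rot pk.
- exists (slift p); first exact: is_sym_slift.
  by case=> [|k] //= /emb_p.
Qed.

Local Open Scope ring_scope.

Definition le_vec c (a b : vec c) := forall i j, a i j <= b i j.
Definition nonzero c (a : vec c) := exists i j, a i j != 0.
Definition minimal_nonzero c (M : vec c -> Prop) (m : vec c) :=
  [/\ M m, nonzero m & forall a, M a -> le_vec a m -> nonzero a -> a = m].
Definition sym_le c (u v : vec c) :=
  exists2 p, is_sym p & forall i j, u i j <= v (p i) j.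

Lemma vec_ext c (u v : vec c) : (forall i j, u i j = v i j) -> u = v.
Proof. by move=> uv; do 2!apply: functional_extensionality => ?; apply: uv. Qed.

Lemma nonneg_sym_le_good c (x : nat -> vec c) :
  (forall k, nonneg (x k)) -> good (@sym_le c) x.
Proof.
move=> nn_x; have [n n_supp] := choice _ (fun k => (nn_x k).1).
pose code k := mkseq (fun i (j : 'I_c) => `|x k i j|%N) (n k).
have [k [l [kl emb_kl]]] := higman (fun _ => 0%N)
  (fun v u w le_uv le_vw j => leq_trans (le_uv j) (le_vw j)) (@wqo_leq_pointwise 'I_c) code.
have [p sym_p emb_p] := emb_sym (fun _ => 0%N) emb_kl.
exists k, l; split=> //; exists p => // i j.
case: (ltnP i (n k)) => [ik | ki]; last by rewrite n_supp //; exact: (nn_x l).2.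
have i_code : (i < size (code k))%N by rewrite size_mkseq.
have [pl /(_ j)] := emb_p i i_code.
rewrite /code size_mkseq in pl; rewrite !nth_mkseq // => le_abs.
by rewrite -(gez0_abs ((nn_x k).2 i j)) -(gez0_abs ((nn_x l).2 (p i) j)) lez_nat.
Qed.

Lemma nncomb_ge0 c (s : seq (nat * vec c)) i j :
  (forall p, List.In p s -> 0 <= p.2 i j) -> 0 <= nncomb s i j.
Proof.
elim: s => [|p s IH] nn_s; rewrite /nncomb ?big_nil ?big_cons //.
apply: addr_ge0; first by apply: mulr_ge0 => //; apply: nn_s; left.
by apply: IH => q qs; apply: nn_s; right.
Qed.

Lemma le_nncomb c (s : seq (nat * vec c)) p i j :
  (forall p, List.In p s -> 0 <= p.2 i j) -> List.In p s -> (0 < p.1)%N ->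
  p.2 i j <= nncomb s i j.
Proof.
elim: s => [//|q s IH] nn_s /= ps p1; rewrite /nncomb big_cons.
have nn_rest : 0 <= nncomb s i j by apply: nncomb_ge0 => r rs; apply: nn_s; right.
have nn_q : 0 <= q.2 i j by apply: nn_s; left.
rewrite /nncomb in nn_rest; case: ps => [qp | ps].
  subst q; apply: ler_wpDr => //; apply: ler_peMl => //; rewrite lez_nat.
apply: ler_wpDl; first exact: mulr_ge0.
exact: IH (fun r rs => nn_s r (or_intror rs)) ps p1.
Qed.

Lemma nncomb_neq0 c (s : seq (nat * vec c)) i j : nncomb s i j != 0 ->
  exists p, [/\ List.In p s, (0 < p.1)%N & p.2 i j != 0].
Proof.
elim: s => [|p s IH]; rewrite /nncomb ?big_nil ?big_cons ?eqxx //.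
have [/eqP -> | nz_p] := boolP (p.1%:Z * p.2 i j == 0).
  by rewrite add0r => /IH [q [qs q1 nz_q]]; exists q; split=> //; right.
move=> _; exists p; move: nz_p; rewrite mulf_eq0 negb_or lt0n => /andP [p1 nz_p].
by split=> //; left.
Qed.

Section MinimalElements.
Variables (c : nat) (M : vec c -> Prop).
Hypothesis M_nonneg : forall v, M v -> nonneg v.

Lemma minimal_in_generators G m : (forall g, G g -> M g) -> generates G M ->
  minimal_nonzero M m -> G m.
Proof.
move=> GM genG [Mm [i [j nz_m]] min_m].
have [s [sG m_eq]] := genG m Mm.
have nn_s q : List.In q s -> nonneg q.2 by move=> /sG /GM /M_nonneg.
have nz_s : nncomb s i j != 0 by rewrite -m_eq.
have [p [ps p1 nz_p]] := nncomb_neq0 nz_s.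
suff <- : p.2 = m by exact: sG.
apply: min_m; [exact: GM (sG _ ps) | | by exists i, j].
by move=> i' j'; rewrite m_eq; apply: le_nncomb => // q /nn_s [].
Qed.

Hypothesis symM : sym_invariant M.

Lemma minimal_sym s h w :
  is_sym s -> minimal_nonzero M h -> sym_act s h w -> minimal_nonzero M w.
Proof.
move=> sym_s [Mh [i [j nz_h]] min_h] act.
have [s' sym_s' [sK s'K]] := is_sym_inv sym_s.
split; [exact: symM sym_s Mh act | by exists (s i), j; rewrite act |].
move=> a Ma le_aw [i' [j' nz_a]].
have act' : sym_act s' a (fun i j => a (s i) j) by move=> k l; rewrite s'K.
have a'_eq : (fun i j => a (s i) j) = h.
  apply: min_h (symM sym_s' Ma act') _ _.
  - by move=> k l; rewrite -act; exact: le_aw.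
  - by exists (s' i'), j'; rewrite s'K.
by apply: vec_ext => k l; rewrite -(s'K k) act -a'_eq.
Qed.

Lemma sym_le_minimal u v : M u -> nonzero u -> minimal_nonzero M v ->
  sym_le u v -> exists2 p, is_sym p & sym_act p u v.
Proof.
move=> Mu [i [j nz_u]] [_ _ min_v] [p sym_p le_uv].
have [q _ [pK qK]] := is_sym_inv sym_p.
have act : sym_act p u (fun i j => u (q i) j) by move=> k l; rewrite pK.
exists p => //; suff <- : (fun i j => u (q i) j) = v by [].
apply: min_v; [exact: symM sym_p Mu act | | by exists (p i), j; rewrite pK].
by move=> k l; have := le_uv (q k) l; rewrite qK.
Qed.

Lemma minimal_orbit_reps :
  exists H, (forall h, List.In h H -> minimal_nonzero M h) /\
    forall m, minimal_nonzero M m -> sym_orbit H m.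
Proof.
have [|H [minH cover]] := good_finite_cover (S := minimal_nonzero M)
  (E := fun u v => exists2 p, is_sym p & sym_act p u v).
  move=> x min_x; have nn_x k : nonneg (x k) by case: (min_x k) => /M_nonneg.
  have [i [j [ij le_ij]]] := nonneg_sym_le_good nn_x.
  have [Mxi nz_xi _] := min_x i.
  by exists i, j; split=> //; exact: sym_le_minimal Mxi nz_xi (min_x j) le_ij.
by exists H; split=> // m /cover [h hH [p sym_p act]]; exists p, h.
Qed.

End MinimalElements.

Definition weight c (n : nat) (m : vec c) : nat :=
  (\sum_(i < n) \sum_(j < c) `|m i j|)%N.

Lemma weightD c n (a b : vec c) :
  (forall i j, 0 <= a i j) -> (forall i j, 0 <= b i j) ->
  weight n (fun i j => a i j + b i j) = (weight n a + weight n b)%N.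
Proof.
move=> nn_a nn_b; rewrite /weight -big_split; apply: eq_bigr => i _.
rewrite -big_split; apply: eq_bigr => j _ /=.
by move: (nn_a i j) (nn_b i j); case: (a i j) => // x; case: (b i j).
Qed.

Lemma weight_gt0 c n (a : vec c) : nonzero a ->
  (forall i j, (n <= i)%N -> a i j = 0) -> (0 < weight n a)%N.
Proof.
move=> [i [j nz_a]] supp_a; have i_n : (i < n)%N.
  by rewrite ltnNge; apply: contra nz_a => /supp_a ->.
rewrite /weight (bigD1 (Ordinal i_n)) //= (bigD1 j) //=.
have : (0 < `|a i j|)%N by rewrite absz_gt0.
lia.
Qed.

Section LatticeMonoid.
Variables (c : nat) (L : vec c -> Prop).
Hypothesis latL : lattice L.
Local Notation M := (monoid_of L).

Lemma monoid_of_sym_invariant : sym_invariant L -> sym_invariant M.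
Proof.
move=> symL s v w sym_s [Lv [_ nn_v]] act; have Lw := symL s v w sym_s Lv act.
have [s' _ [_ s'K]] := is_sym_inv sym_s.
by split=> //; split; [exact: latL.1 | move=> i j; rewrite -(s'K i) act].
Qed.

Lemma monoid_of_sub a m : M a -> M m -> le_vec a m ->
  M (fun i j => m i j - a i j).
Proof.
move=> [La _] [Lm _] le_am; have Lb := latL.2.2 _ _ Lm La.
by split=> //; split; [exact: latL.1 | move=> i j; rewrite subr_ge0].
Qed.

Lemma nonminimal_split m : M m -> nonzero m -> ~ minimal_nonzero M m ->
  exists a b, [/\ M a, M b, nonzero a, nonzero b & m = fun i j => a i j + b i j].
Proof.
move=> Mm nz_m not_min; apply: NNPP => no_split; apply: not_min.
split=> // a Ma le_am nz_a; apply: vec_ext => i j; apply/eqP; apply: NNPP => neq.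
apply: no_split; exists a, (fun i j => m i j - a i j); split=> //.
- exact: monoid_of_sub.
- by exists i, j; rewrite subr_eq0 eq_sym; apply/negP.
- by apply: vec_ext => i' j'; rewrite addrC subrK.
Qed.

Lemma generated_by_minimal m : M m -> exists s : seq (nat * vec c),
  (forall p, List.In p s -> minimal_nonzero M p.2) /\ m = nncomb s.
Proof.
move=> Mm; have [_ [[n supp_m] _]] := Mm.
move: {2}(weight n m) (erefl (weight n m)) => k wk.
elim/ltn_ind: k m Mm supp_m wk => k IH m Mm supp_m wk.
have [nz_m | zero_m] := classic (nonzero m); last first.
  exists [::]; split=> //; apply: vec_ext => i j; rewrite /nncomb big_nil.
  by apply/eqP; apply: NNPP => nz; apply: zero_m; exists i, j; apply/negP.
have [min_m | not_min] := classic (minimal_nonzero M m).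
  exists [:: (1%N, m)]; split; first by move=> p [<- | []].
  by apply: vec_ext => i j; rewrite /nncomb big_cons big_nil mul1r addr0.
have [a [b [Ma Mb nz_a nz_b m_ab]]] := nonminimal_split Mm nz_m not_min.
have nn_a := Ma.2.2; have nn_b := Mb.2.2.
have supp_ab i j : (n <= i)%N -> a i j = 0 /\ b i j = 0.
  move=> ni; move: (supp_m i j ni) => /eqP; rewrite m_ab paddr_eq0 //.
  by case/andP=> /eqP -> /eqP ->.
have supp_a i j ni := (supp_ab i j ni).1; have supp_b i j ni := (supp_ab i j ni).2.
have w_ab : k = (weight n a + weight n b)%N by rewrite -wk m_ab weightD.
have wa := weight_gt0 nz_a supp_a; have wb := weight_gt0 nz_b supp_b.
have lt_a : (weight n a < k)%N by lia.
have lt_b : (weight n b < k)%N by lia.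
rewrite m_ab.
have [sa [min_sa ->]] := IH _ lt_a a Ma supp_a erefl.
have [sb [min_sb ->]] := IH _ lt_b b Mb supp_b erefl.
exists (sa ++ sb); split; first by move=> p /List.in_app_iff [/min_sa | /min_sb].
by apply: vec_ext => i j; rewrite /nncomb big_cat.
Qed.

Lemma minimal_hilbert_basis G :
  (forall g, G g <-> minimal_nonzero M g) -> hilbert_basis G M.
Proof.
move=> GE; split; first by move=> g /GE [].
split.
- move=> m /generated_by_minimal [s [min_s ->]].
  by exists s; split=> // p /min_s /GE.
- move=> G' G'G gen_G' g /GE; apply: minimal_in_generators gen_G' => [v [] // | g'].
  by move=> /G'G /GE [Mg' _ _].
Qed.

End LatticeMonoid.

Theorem lemma4p13 (c : nat) (hc : (0 < c)%N) (L : vec c -> Prop) :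
  lattice L -> sym_invariant L ->
  exists H : seq (vec c), equiv_hilbert_basis H (monoid_of L).
Proof.
move=> latL symL; have symM := monoid_of_sym_invariant latL symL.
have [H [minH cover]] := minimal_orbit_reps (fun v (Mv : monoid_of L v) => Mv.2) symM.
exists H; split; first by move=> h /minH [].
apply: (minimal_hilbert_basis latL) => g; split; last exact: cover.
by move=> [s [h [sym_s [hH act]]]]; exact: (minimal_sym symM sym_s (minH h hH) act).
Qed.
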